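(* The optimal value of problem (D) equals the optimal value of the mixed-integer linear program: minimize $B$ over $B\in\mathbb{N}$ and $\gamma\in\{0,1\}^{\mathcal{C}\times\mathcal{N}}$ subject to $\sum_{g\in\mathcal{N}}\gamma_{c,g}=|\mathcal{N}_c|$ for all $c\in\mathcal{C}$; $\sum_{c\in\mathcal{C}}\gamma_{c,g}=1$ for all $g\in\mathcal{N}$; $B\ge\frac{1}{v_c}\sum_{g\in\mathcal{N}}g\,\gamma_{c,g}$ for all $c\in\mathcal{C}$; and $B\ge N$. Moreover, from any optimal solution $(B,\gamma)$ of this program one can construct a feasible solution of (D) with the same value $B$.
   Context: A ballot style consists of contests $\mathcal{C}=\{1,\ldots,C\}$, candidates $\mathcal{N}=\{1,\ldots,N\}$ (identified with the integers $1,\ldots,N$) partitioned into nonempty sets $\mathcal{N}_c$ ($c\in\mathcal{C}$), and positive integers $v_c$. $\mathscr{B}=\{\beta\subseteq\mathcal{N}: |\mathcal{N}_c\cap\beta|\le v_c\ \forall c\}$. Problem (D): minimize $B$ over $B\in\mathbb{N}$ and $\beta_1,\ldots,\beta_B\in\mathscr{B}$ subject to $|\{b\in\{1,\ldots,B\}: i\in\beta_b\}|\neq|\{b\in\{1,\ldots,B\}: j\in\beta_b\}|$ for all distinct $i,j\in\mathcal{N}$, and $|\{b\in\{1,\ldots,B\}: i\in\beta_b\}|\ge1$ for all $i\in\mathcal{N}$. *)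

From mathcomp Require Import all_boot all_order all_algebra.
Set Implicit Arguments. Unset Strict Implicit. Unset Printing Implicit Defensive.
Import Order.TTheory GRing.Theory Num.Theory.

(* Ballot style: C contests ('I_C), N candidates ('I_N); candidate i : 'I_N
   is identified with the integer label i.+1 in {1,...,N}.
   part i = the contest c with i \in N_c; v c = number of votes allowed. *)

Definition contest_set (C N : nat) (part : 'I_N -> 'I_C) (c : 'I_C) : {set 'I_N} :=
  [set i | part i == c].

Definition valid_ballot (C N : nat) (part : 'I_N -> 'I_C) (v : 'I_C -> nat)
  (beta : {set 'I_N}) : Prop :=
  forall c : 'I_C, #|contest_set part c :&: beta| <= v c.

Definition nvotes (N : nat) (betas : seq {set 'I_N}) (i : 'I_N) : nat :=
  count (fun beta : {set 'I_N} => i \in beta) betas.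

Definition feasD (C N : nat) (part : 'I_N -> 'I_C) (v : 'I_C -> nat)
  (B : nat) (betas : seq {set 'I_N}) : Prop :=
  [/\ size betas = B,
      (forall beta, beta \in betas -> valid_ballot part v beta),
      (forall i j : 'I_N, i != j -> nvotes betas i != nvotes betas j)
    & (forall i : 'I_N, 1 <= nvotes betas i)].

Definition optD (C N : nat) (part : 'I_N -> 'I_C) (v : 'I_C -> nat) (B : nat) : Prop :=
  (exists betas, feasD part v B betas) /\
  (forall B' betas', feasD part v B' betas' -> B <= B').

Definition feasM (C N : nat) (part : 'I_N -> 'I_C) (v : 'I_C -> nat)
  (B : nat) (gamma : 'I_C -> 'I_N -> bool) : Prop :=
  [/\ (forall c : 'I_C, \sum_(g : 'I_N) (gamma c g : nat) = #|contest_set part c|),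
      (forall g : 'I_N, \sum_(c : 'I_C) (gamma c g : nat) = 1),
      (forall c : 'I_C,
          ((v c)%:R^-1 * \sum_(g : 'I_N) ((g.+1)%:R * (gamma c g)%:R)
             <= (B%:R : rat))%R)
    & N <= B].

Definition optM (C N : nat) (part : 'I_N -> 'I_C) (v : 'I_C -> nat)
  (B : nat) (gamma : 'I_C -> 'I_N -> bool) : Prop :=
  feasM part v B gamma /\
  (forall B' gamma', feasM part v B' gamma' -> B <= B').

From mathcomp Require Import all_boot all_order all_algebra.
From mathcomp Require Import zify.
From Stdlib Require Import Classical Wf_nat.
Set Implicit Arguments. Unset Strict Implicit. Unset Printing Implicit Defensive.
Import Order.TTheory GRing.Theory Num.Theory.

(* Both problems are reduced to one
   combinatorial notion, a vote profile of value B: an injective assignment of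
   vote counts 0 < a i <= B to the candidates such that every contest c receives
   at most B * v c votes in total.
   - (D) -> profile: the vote counts of feasible ballots form a profile, since
     each of the B ballots casts at most v c votes in contest c.
   - profile -> (D): round-robin ballots.  The candidates of a contest occupy
     consecutive windows of lengths a i on the cycle Z/B; ballot b contains the
     candidates whose window covers b, hence at most v c of each contest.
   - profile -> (M): the ranks rho i of the vote counts form a permutation with
     rho i < a i, and gamma gives contest c the labels rho i + 1, i in N_c.
   - (M) -> profile: matching the candidates of each contest with the labels
     that gamma assigns to it gives a profile of label values.
   So (D) and (M) have the same feasible values; the least one, which exists
   because a trivial profile exists, is the common optimum. *)

Lemma card_le_inj_bounded (T : finType) (A : {pred T}) (f : T -> nat) (m : nat) :
  {in A &, injective f} -> {in A, forall x, f x < m} -> #|A| <= m.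
Proof.
move=> finj fbound; rewrite cardE -(size_map f) -(size_iota 0 m).
apply: uniq_leq_size.
  by rewrite map_inj_in_uniq ?enum_uniq // => x y; rewrite !mem_enum; exact: finj.
by move=> y /mapP [x]; rewrite mem_enum => /fbound xm ->; rewrite mem_iota.
Qed.

Section Rank.
Variables (T : finType) (f : T -> nat).

Definition rank (i : T) : nat := #|[set j | f j < f i]|.

Lemma rank_lt_card i : rank i < #|T|.
Proof.
rewrite /rank -cardsT; apply: proper_card; apply/properP; split; first exact: subsetT.
by exists i; rewrite !inE ?ltnn.
Qed.

Lemma rank_mono i j : f j < f i -> rank j < rank i.
Proof.
move=> fji; apply: proper_card; apply/properP; split.
  by apply/subsetP => k; rewrite !inE => /ltn_trans; apply.
by exists j; rewrite !inE ?fji ?ltnn.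
Qed.

Hypothesis finj : injective f.

Lemma rank_le i : rank i <= f i.
Proof.
by apply: (card_le_inj_bounded (f := f)) => [x y _ _|x]; [exact: finj|rewrite inE].
Qed.

Lemma rank_inj : injective rank.
Proof.
move=> i j eq_rank; apply: finj; case: (ltngtP (f i) (f j)) => // /rank_mono;
  by rewrite eq_rank ltnn.
Qed.

End Rank.

Lemma ord_ranking (N : nat) (f : 'I_N -> nat) : injective f ->
  exists rho : 'I_N -> 'I_N, injective rho /\ forall i, rho i <= f i.
Proof.
move=> finj; have rankN i : rank f i < N.
  by rewrite -[X in _ < X]card_ord rank_lt_card.
exists (fun i => Ordinal (rankN i)).
by split => [i j /(congr1 val) /(rank_inj finj)|i] //; exact: rank_le.
Qed.

Lemma least_witness (P : nat -> Prop) :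
  (exists n, P n) -> exists m, P m /\ forall n, P n -> m <= n.
Proof.
move=> exP; have [m [[Pm least] _]] :=
  dec_inh_nat_subset_has_unique_least_element P (fun n => classic (P n)) exP.
by exists m; split => // n /least /ssrnat.leP.
Qed.

(* If the classes of cls and the disjoint sets G k have the same sizes, some
   injection sends every element of class k into G k: pair the j-th element
   of each class with the j-th element of the corresponding set. *)
Lemma class_matching (T K : finType) (cls : T -> K) (G : K -> pred T) :
  (forall k, #|G k| = #|[pred i | cls i == k]|) ->
  (forall x k k', G k x -> G k' x -> k = k') ->
  exists sig : T -> T, injective sig /\ forall i, G (cls i) (sig i).
Proof.
move=> Gcard Gdisj; pose cl k := enum [pred i | cls i == k].
have cl_mem i : i \in cl (cls i) by rewrite mem_enum inE.
pose sig i := nth i (enum (G (cls i))) (index i (cl (cls i))).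
have idx_lt i j : cls j = cls i -> index j (cl (cls i)) < size (enum (G (cls i))).
  by move=> <-; rewrite -cardE Gcard cardE index_mem.
have sigG i : G (cls i) (sig i) by have := mem_nth i (idx_lt i i erefl); rewrite mem_enum.
exists sig; split=> // i j eq_sig.
have cls_ij : cls j = cls i by apply: (Gdisj (sig i)); rewrite // eq_sig.
move: eq_sig; rewrite /sig cls_ij (set_nth_default i j) ?idx_lt //.
move/eqP; rewrite nth_uniq ?idx_lt ?enum_uniq // => /eqP eq_idx.
by rewrite -(nth_index i (cl_mem i)) eq_idx -cls_ij nth_index.
Qed.

(* cyc_offset B s b is the number of steps from s forward to b on the cycle
   Z/B, so that s + cyc_offset B s b is the first point >= s congruent to b. *)
Definition cyc_offset (B s b : nat) : nat := (b + (B - s %% B)) %% B.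

Lemma cyc_offset_lt B s b : 0 < B -> cyc_offset B s b < B.
Proof. exact: ltn_pmod. Qed.

Lemma cyc_offset_mod B s b : b < B -> (s + cyc_offset B s b) %% B = b.
Proof.
move=> bB; have B_gt0 : 0 < B by lia.
rewrite modnDmr {1}(divn_eq s B).
move: (s %/ B) (s %% B) (ltn_pmod s B_gt0) => q r rB.
have -> : q * B + r + (b + (B - r)) = q.+1 * B + b by rewrite mulSn; lia.
by rewrite modnMDl modn_small.
Qed.

(* Exactly a of the points b < B lie in the window of length a <= B starting
   at s, because b |-> cyc_offset B s b permutes {0, ..., B-1}. *)
Lemma count_cyc_offset B s a : a <= B ->
  count (fun b => cyc_offset B s b < a) (iota 0 B) = a.
Proof.
move=> aB; case: (posnP B) => [B0|B_gt0]; first by move: aB; rewrite B0 leqn0 => /eqP ->.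
have offs_inj : {in iota 0 B &, injective (cyc_offset B s)}.
  move=> b b'; rewrite !mem_iota /= => bB b'B eq_off.
  by rewrite -(cyc_offset_mod s bB) eq_off cyc_offset_mod.
have offs_uniq : uniq (map (cyc_offset B s) (iota 0 B)).
  by rewrite map_inj_in_uniq ?iota_uniq.
have offs_sub : {subset map (cyc_offset B s) (iota 0 B) <= iota 0 B}.
  by move=> _ /mapP [b _ ->]; rewrite mem_iota cyc_offset_lt.
have offs_size : size (iota 0 B) <= size (map (cyc_offset B s) (iota 0 B)).
  by rewrite size_map.
have [_ offs_eq] := uniq_min_size offs_uniq offs_sub offs_size.
have offs_perm := uniq_perm offs_uniq (iota_uniq 0 B) offs_eq.
rewrite -(count_map _ (fun k => k < a)) (permP offs_perm).
by rewrite -size_filter (filter_iota_ltn 0 aB) size_iota.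
Qed.

Lemma sum_boolE (T : finType) (P : pred T) : \sum_(i : T) (P i : nat) = #|P|.
Proof.
rewrite -sum1_card [RHS]big_mkcond.
by apply: eq_bigr => i _; rewrite unfold_in; case: (P i).
Qed.

Section BallotStyle.
Variables (C N : nat) (part : 'I_N -> 'I_C) (v : 'I_C -> nat).

Definition vote_profile (B : nat) (a : 'I_N -> nat) : Prop :=
  [/\ injective a, forall i, 0 < a i <= B
    & forall c, \sum_(i | part i == c) a i <= B * v c].

Lemma vote_profile_pred_inj B a : vote_profile B a -> injective (fun i => (a i).-1).
Proof.
case=> a_inj a_bound _ i j /= eq_a; apply: a_inj.
by case/andP: (a_bound i) => [ai_gt0 _]; case/andP: (a_bound j) => [aj_gt0 _]; lia.
Qed.

Lemma vote_profile_ge_N B a : vote_profile B a -> N <= B.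
Proof.
move=> prof; have [_ a_bound _] := prof.
have := card_le_inj_bounded (A := 'I_N) (m := B) (in2W (vote_profile_pred_inj prof)).
rewrite card_ord; apply=> i _.
by case/andP: (a_bound i) => ai_gt0 aiB; rewrite prednK.
Qed.

Lemma nvotesE (betas : seq {set 'I_N}) (i : 'I_N) :
  nvotes betas i = \sum_(beta <- betas) (i \in beta).
Proof. by rewrite /nvotes -sum1_count big_mkcond. Qed.

Lemma contest_votes_le betas c :
  (forall beta, beta \in betas -> valid_ballot part v beta) ->
  \sum_(i | part i == c) nvotes betas i <= size betas * v c.
Proof.
move=> valid; under eq_bigr => i _ do rewrite nvotesE.
rewrite exchange_big /= -sum1_size big_distrl /= big_seq [X in _ <= X]big_seq.
apply: leq_sum => beta /valid/(_ c); rewrite mul1n; apply: leq_trans.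
rewrite -sum1_card [X in X <= _]big_mkcond [X in _ <= X]big_mkcond.
by apply: leq_sum => i _; rewrite !inE; case: (part i == c); case: (i \in beta).
Qed.

Lemma feasD_profile B betas : feasD part v B betas -> vote_profile B (nvotes betas).
Proof.
case=> size_B valid distinct voted; split.
- by move=> i j eq_n; apply/eqP; apply: contraTT (distinct i j) _; rewrite eq_n.
- by move=> i; rewrite voted -size_B /nvotes count_size.
- by move=> c; rewrite -size_B; exact: contest_votes_le.
Qed.

(* The MILP variable induced by a relabelling rho : contest c receives label
   g + 1 iff g = rho i for a candidate i of c. *)
Definition placement (rho : 'I_N -> 'I_N) (c : 'I_C) (g : 'I_N) : bool :=
  [exists i, (part i == c) && (rho i == g)].

Lemma placementE (rho : 'I_N -> 'I_N) c i :
  injective rho -> placement rho c (rho i) = (part i == c).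
Proof.
move=> rho_inj; apply/existsP/idP => [[j /andP [/eqP <- /eqP /rho_inj ->]] //|part_i].
by exists i; rewrite part_i eqxx.
Qed.

Lemma contest_boundE B c (gamma : 'I_C -> 'I_N -> bool) : 0 < v c ->
  ((v c)%:R^-1 * \sum_(g : 'I_N) ((g.+1)%:R * (gamma c g)%:R) <= (B%:R : rat))%R
  = (\sum_(g | gamma c g) g.+1 <= B * v c).
Proof.
move=> vc_gt0.
have -> : (\sum_(g : 'I_N) ((g.+1)%:R * (gamma c g)%:R)
           = (\sum_(g | gamma c g) g.+1)%:R :> rat)%R.
  rewrite natr_sum [RHS]big_mkcond; apply: eq_bigr => g _.
  by case: (gamma c g); rewrite /= ?mulr1 ?mulr0.
by rewrite ler_pdivrMl ?ltr0n // -natrM ler_nat mulnC.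
Qed.

Lemma placement_feasM B (rho : 'I_N -> 'I_N) :
  injective rho -> N <= B -> (forall c, 0 < v c) ->
  (forall c, \sum_(i | part i == c) (rho i).+1 <= B * v c) ->
  feasM part v B (placement rho).
Proof.
move=> rho_inj NB v_gt0 sum_le; split => // [c|g|c].
- rewrite (reindex_inj rho_inj) /=; under eq_bigr => i _ do rewrite placementE //.
  by rewrite sum_boolE cardsE.
- have /codomP [i ->] := injF_onto rho_inj g.
  under eq_bigr => c _ do rewrite placementE //.
  by rewrite sum_boolE (@eq_card1 _ (part i)) // => c; rewrite !inE.
- rewrite contest_boundE // (reindex_inj rho_inj) /=.
  by under eq_bigl => i do rewrite placementE //.
Qed.

(* profile -> (M): use the ranks of the vote counts as labels. *)
Lemma profile_feasM B a : (forall c, 0 < v c) -> vote_profile B a ->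
  exists gamma, feasM part v B gamma.
Proof.
move=> v_gt0 prof; have NB := vote_profile_ge_N prof.
have [rho [rho_inj rho_le]] := ord_ranking (vote_profile_pred_inj prof).
case: prof => _ a_bound sum_le; exists (placement rho).
apply: placement_feasM => // c; apply: leq_trans (sum_le c); apply: leq_sum => i _.
by case/andP: (a_bound i) => ai_gt0 _; rewrite -(prednK ai_gt0) ltnS rho_le.
Qed.

(* (M) -> profile: the columns of gamma partition the labels into sets of
   the contest sizes; matching candidates to labels gives the vote counts. *)
Lemma feasM_profile B gamma : (forall c, 0 < v c) -> feasM part v B gamma ->
  exists a, vote_profile B a.
Proof.
move=> v_gt0 [row_sum col_sum bound NB].
have gamma_card c : #|gamma c| = #|[pred i | part i == c]|.
  by rewrite -sum_boolE row_sum cardsE.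
have gamma_disj g c c' : gamma c g -> gamma c' g -> c = c'.
  move=> gcg gc'g; have /sum_nat_eq1 [c0 [_ _ others]] := introT eqP (col_sum g).
  have at_c0 d : gamma d g -> d = c0.
    by move=> gdg; apply/eqP; apply: contraTT gdg => /others/(_ isT); case: (gamma d g).
  by rewrite (at_c0 _ gcg) (at_c0 _ gc'g).
have [sig [sig_inj sig_in]] := class_matching gamma_card gamma_disj.
exists (fun i => (sig i).+1); split.
- by move=> i j /succn_inj /val_inj /sig_inj.
- by move=> i; have := ltn_ord (sig i); lia.
- move=> c; have := bound c; rewrite contest_boundE // => /(leq_trans _); apply.
  rewrite [X in _ <= X](reindex_inj sig_inj) /=.
  by apply: sub_le_big => [//|n m|i /eqP <-//]; exact: leq_addr.
Qed.

(* Candidate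
   i of contest c occupies the window [offset i, offset i + a i) of the line,
   where the windows of c are laid out consecutively in index order; ballot b
   contains i iff the window of i contains a point congruent to b mod B. *)
Section RoundRobin.
Variables (B : nat) (a : 'I_N -> nat).

Definition offset (i : 'I_N) : nat := \sum_(j | (part j == part i) && (j < i)) a j.

Lemma offset_addE i : offset i + a i = \sum_(j | (part j == part i) && (j <= i)) a j.
Proof.
rewrite [RHS](bigD1 i) ?eqxx ?leqnn //= addnC; congr (_ + _); apply: eq_bigl => j.
by rewrite ltn_neqAle; case: (part j == part i); rewrite //= andbC.
Qed.

Lemma offset_disjoint i j : part j = part i -> j < i -> offset j + a j <= offset i.
Proof.
move=> part_ji lt_ji; rewrite offset_addE part_ji.
apply: sub_le_big => // [m n|k /andP [-> le_kj]]; first exact: leq_addr.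
exact: leq_ltn_trans le_kj lt_ji.
Qed.

Hypothesis contest_le : forall c, \sum_(i | part i == c) a i <= B * v c.

Lemma offset_bound i : offset i + a i <= B * v (part i).
Proof.
rewrite offset_addE; apply: leq_trans (contest_le (part i)).
by apply: sub_le_big => // [m n|k /andP []//]; exact: leq_addr.
Qed.

Definition rr_ballot (b : nat) : {set 'I_N} := [set i | cyc_offset B (offset i) b < a i].

Definition rr_ballots : seq {set 'I_N} := map rr_ballot (iota 0 B).

(* A window of length a i <= B covers exactly a i residues mod B. *)
Lemma nvotes_rr i : a i <= B -> nvotes rr_ballots i = a i.
Proof.
move=> aiB; rewrite /nvotes count_map -(count_cyc_offset (offset i) aiB).
by apply: eq_count => b; rewrite /= inE.
Qed.

(* Ballot b meets each window of contest c in at most one point pos i,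
   congruent to b; these points are distinct and below B * v c, so their
   quotients by B are distinct and below v c. *)
Lemma rr_ballot_valid b : b < B -> valid_ballot part v (rr_ballot b).
Proof.
move=> bB c; have B_gt0 : 0 < B by lia.
pose pos i := offset i + cyc_offset B (offset i) b.
apply: (card_le_inj_bounded (f := fun i => pos i %/ B)) => [i j|i]; rewrite !inE.
- case/andP=> /eqP part_i in_i /andP [/eqP part_j in_j] eq_div.
  have eq_pos : pos i = pos j.
    by rewrite (divn_eq (pos i) B) (divn_eq (pos j) B) eq_div !cyc_offset_mod.
  move: eq_pos; rewrite /pos; apply: contra_eq => /eqP neq_ij.
  case: (ltngtP i j) => [lt_ij|lt_ji|/val_inj //].
  + by have := offset_disjoint (etrans part_i (esym part_j)) lt_ij; lia.
  + by have := offset_disjoint (etrans part_j (esym part_i)) lt_ji; lia.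
- case/andP=> /eqP part_i in_i; rewrite ltn_divLR // mulnC -part_i.
  by have := offset_bound i; rewrite /pos; lia.
Qed.

End RoundRobin.

Lemma profile_feasD B a : vote_profile B a -> exists betas, feasD part v B betas.
Proof.
case=> a_inj a_bound contest_le.
have votes i : nvotes (rr_ballots B a) i = a i.
  by apply: nvotes_rr; case/andP: (a_bound i).
exists (rr_ballots B a); split.
- by rewrite size_map size_iota.
- by move=> beta /mapP [b]; rewrite mem_iota => /andP [_ bB] ->; exact: rr_ballot_valid.
- by move=> i j; rewrite !votes (inj_eq a_inj).
- by move=> i; rewrite votes; case/andP: (a_bound i).
Qed.

Lemma vote_profile_exists : (forall c, 0 < v c) -> exists B a, vote_profile B a.
Proof.
move=> v_gt0; exists (N * N), (fun i => (i : nat).+1); split.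
- by move=> i j /succn_inj /val_inj.
- by move=> i; have := ltn_ord i; nia.
- move=> c; apply: leq_trans (leq_pmulr _ (v_gt0 c)).
  rewrite -[X in _ <= X * _](card_ord N) -sum_nat_const big_mkcond.
  by apply: leq_sum => i _; case: (part i == c) => //; exact: ltn_ord.
Qed.

End BallotStyle.

Theorem proposition5 (C N : nat) (part : 'I_N -> 'I_C) (v : 'I_C -> nat)
  (Hnonempty : forall c : 'I_C, exists i : 'I_N, part i = c)
  (Hv : forall c : 'I_C, 0 < v c) :
  (exists B : nat, optD part v B /\ exists gamma, optM part v B gamma) /\
  (forall B gamma, optM part v B gamma -> exists betas, feasD part v B betas).
Proof.
have M_to_D B gamma : feasM part v B gamma -> exists betas, feasD part v B betas.
  by move=> /(feasM_profile Hv) [a /profile_feasD].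
have D_to_M B betas : feasD part v B betas -> exists gamma, feasM part v B gamma.
  by move=> /feasD_profile /(profile_feasM Hv).
have [B0 [[gamma0 feas0] least0]] : exists B0,
    (exists gamma, feasM part v B0 gamma) /\
    forall B, (exists gamma, feasM part v B gamma) -> B0 <= B.
  apply: least_witness.
  have [B [a /(profile_feasM Hv) feasB]] := vote_profile_exists part Hv.
  by exists B.
split; last by move=> B gamma [/M_to_D].
exists B0; split; first split.
- exact: M_to_D feas0.
- by move=> B betas /D_to_M /least0.
- by exists gamma0; split=> // B gamma feasB; apply: least0; exists gamma.
Qed.
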